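(* Let $\alpha$ be an algebraic number of degree $3$ such that $\mathbb Q(\alpha)/\mathbb Q$ is not a Galois extension. Let $\alpha_1=\alpha,\alpha_2,\alpha_3$ be the conjugates of $\alpha$ over $\mathbb Q$, and assume that the field $\mathbb Q(\alpha_1,\alpha_2,\alpha_3)$ contains no primitive cube root of unity. If $\xi_1,\xi_2,\xi_3$ are roots of unity with $\alpha_1\xi_1+\alpha_2\xi_2+\alpha_3\xi_3=0$, then $\xi_1=\xi_2=\xi_3$, and consequently $\alpha_1+\alpha_2+\alpha_3=0$. *)

From mathcomp Require Import all_boot all_algebra algC.
Set Implicit Arguments. Unset Strict Implicit. Unset Printing Implicit Defensive.
Import GRing.Theory Num.Theory.
Local Open Scope ring_scope.

Definition is_subfield (S : algC -> Prop) : Prop :=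
  [/\ S 0, S 1,
      (forall x y, S x -> S y -> S (x - y)),
      (forall x y, S x -> S y -> S (x * y)) &
      (forall x, S x -> S x^-1)].

(* The field Q(s) generated over Q by the finite list s: the smallest subfield
   of algC containing all elements of s (every subfield contains Q). *)
Definition genfield (s : seq algC) (x : algC) : Prop :=
  forall S : algC -> Prop, is_subfield S -> (forall a, a \in s -> S a) -> S x.

(* In characteristic 0, a finite extension is Galois iff it is normal. *)
Definition normal_over_Q (K : algC -> Prop) : Prop :=
  forall x, K x -> forall q : {poly rat}, irreducible_poly q ->
    root (map_poly ratr q) x ->
    forall y, root (map_poly ratr q) y -> K y.

Definition is_root_of_unity (z : algC) : Prop := exists n : nat, (0 < n)%N /\ z ^+ n = 1.

From HB Require Import structures.
From mathcomp Require Import all_boot all_algebra all_field.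
From mathcomp Require Import ring polyorder.
From Stdlib Require Import Classical.
Import GRing.Theory Num.Theory.
Set Implicit Arguments.
Unset Strict Implicit.
Unset Printing Implicit Defensive.
Local Open Scope ring_scope.

(* Galois-theoretic idea: the automorphisms of algC act on
   {a1, a2, a3} as the full group S_3.  Automorphisms act on roots of unity by
   powers, so they commute there and every commutator fixes the xi_i; the
   commutator of an odd permutation with a 3-cycle is a 3-cycle.  Applying it
   twice to the relation yields its two cyclic shifts; the product of the
   Lagrange resolvents (x1 + om x2 + om^2 x3)(a1 + om^2 a2 + om a3) then
   vanishes for each primitive cube root om.  As om is not in Q(a1, a2, a3),
   the a-resolvents are nonzero, so the xi-resolvents vanish, forcing
   xi1 = xi2 = xi3 and hence a1 + a2 + a3 = 0.
   The file develops: closure properties of generated subfields; automorphisms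
   of algC (transitivity on conjugates, fixed points are rational, action on
   roots of unity); cube roots of unity and resolvents over any field; the
   Galois action on the roots of a rational cubic; and finally the theorem. *)

Local Notation pQtoC := (map_poly (ratr : rat -> algC)).

Section Subfields.

Variable S : algC -> Prop.
Hypothesis S_subfield : is_subfield S.

Lemma subfieldB x y : S x -> S y -> S (x - y).
Proof. by case: S_subfield => _ _ SB _ _; apply: SB. Qed.

Lemma subfieldN x : S x -> S (- x).
Proof. by move=> Sx; rewrite -sub0r; apply: subfieldB => //; case: S_subfield. Qed.

Lemma subfieldD x y : S x -> S y -> S (x + y).
Proof. by move=> Sx Sy; rewrite -[y]opprK; apply/subfieldB/subfieldN. Qed.

Lemma subfieldM x y : S x -> S y -> S (x * y).
Proof. by case: S_subfield => _ _ _ SM _; apply: SM. Qed.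

Lemma subfield_div x y : S x -> S y -> S (x / y).
Proof. by case: S_subfield => _ _ _ _ SV Sx Sy; apply/subfieldM/SV. Qed.

Lemma subfield_Crat x : x \in Crat -> S x.
Proof.
have Snat n : S n%:R.
  elim: n => [|n IHn]; first by case: S_subfield.
  by rewrite mulrS; apply: subfieldD => //; case: S_subfield.
have Sint (m : int) : S m%:~R.
  by case: m => n; rewrite ?NegzE ?mulrNz; [apply: Snat | apply/subfieldN/Snat].
by case/CratP=> r ->; apply: subfield_div.
Qed.

Lemma subfield_horner (q : {poly rat}) a : S a -> S (map_poly ratr q).[a].
Proof.
move=> Sa; elim/poly_ind: q => [|q c IHq].
  by rewrite rmorph0 horner0; case: S_subfield.
rewrite rmorphD rmorphM /= map_polyX map_polyC !hornerE.
by apply: subfieldD; [apply: subfieldM | apply: subfield_Crat; apply: Crat_rat].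
Qed.

End Subfields.

Lemma genfield_subfield s : is_subfield (genfield s).
Proof.
split.
- by move=> S [].
- by move=> S [].
- by move=> x y gx gy S SS Ss; apply: subfieldB => //; [apply: gx | apply: gy].
- by move=> x y gx gy S SS Ss; apply: subfieldM => //; [apply: gx | apply: gy].
- by move=> x gx S SS Ss; case: (SS) => _ _ _ _ SV; apply: SV; apply: gx.
Qed.

Lemma mem_genfield s a : a \in s -> genfield s a.
Proof. by move=> sa S _; apply. Qed.

Lemma genfield_aut s (nu : {rmorphism algC -> algC}) :
  (forall a, a \in s -> genfield s (nu a)) ->
  forall x, genfield s x -> genfield s (nu x).
Proof.
move=> nu_s x gx; apply: (gx (fun z => genfield s (nu z))) => //.
have sub := genfield_subfield s.
split=> [||u v|u v|u]; rewrite ?rmorph0 ?rmorph1; try by case: sub.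
- by rewrite rmorphB; apply: subfieldB.
- by rewrite rmorphM; apply: subfieldM.
- by rewrite fmorphV; case: sub => _ _ _ _; apply.
Qed.

Lemma num_field_minPoly (Qs : fieldExtType rat) (QsC : {rmorphism Qs -> algC})
    (u : Qs) :
  exists q : {poly rat}, map_poly QsC (minPoly 1 u) = pQtoC q.
Proof.
have coefQ i : (minPoly 1 u)`_i \in 1%VS by apply/polyOverP/minPolyOver.
have a_ i := sig_eqW (vlineP _ _ (coefQ i)).
exists (\poly_(i < size (minPoly 1 u)) sval (a_ i)).
apply/polyP=> i; rewrite coef_poly coef_map coef_poly /=.
case: ifP => _; rewrite ?rmorph0 //; case: (a_ i) => a /= ->.
by rewrite alg_num_field fmorph_rat.
Qed.

Lemma num_field_conjugate (Qs : fieldExtType rat) (QsC : {rmorphism Qs -> algC})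
    (u v : Qs) :
  root (minCpoly (QsC u)) (QsC v) -> root (minPoly 1 u) v.
Proof.
move=> root_v; have [q Dq] := num_field_minPoly QsC u.
have [r [Dr _] min_r] := minCpolyP (QsC u).
have: root (pQtoC q) (QsC u) by rewrite -Dq fmorph_root root_minPoly.
rewrite min_r => /dvdpP[k Dk].
by rewrite -(fmorph_root QsC) Dq Dk rmorphM rootM /= -Dr root_v orbT.
Qed.

Lemma num_field_splitting (q : {poly rat}) (rs : seq algC)
    (Qs : fieldExtType rat) (QsC : {rmorphism Qs -> algC}) (s1 : seq Qs) :
    pQtoC q = \prod_(r <- rs) ('X - r%:P) ->
    map QsC s1 = rs -> <<1 & s1>>%VS = fullv ->
  forall K : {subfield Qs},
    splittingFieldFor K (map_poly (in_alg Qs) q) fullv.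
Proof.
move=> Dq Ds1 gen K; exists s1.
  have -> : map_poly (in_alg Qs) q = \prod_(z <- s1) ('X - z%:P).
    apply: (map_poly_inj QsC); rewrite rmorph_prod /= -map_poly_comp.
    rewrite (@eq_map_poly _ _ _ ratr) => [|a]; last first.
      by rewrite /= rmorphZ_num rmorph1 mulr1.
    rewrite Dq -Ds1 big_map; apply: eq_bigr => z _.
    by rewrite rmorphB /= map_polyX map_polyC.
  exact: eqpxx.
by apply/eqP; rewrite eqEsubv subvf /= -gen adjoin_seqSl ?sub1v.
Qed.

(* Conjugate algebraic numbers are exchanged by an automorphism of algC: extend
   x |-> y to the splitting field of minCpoly x, then to all of algC. *)
Lemma conjugate_aut x y : root (minCpoly x) y ->
  exists nu : {rmorphism algC -> algC}, nu x = y.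
Proof.
move=> root_y; have [q [Dq _] _] := minCpolyP x.
have [rs Drs] := closed_field_poly_normal (minCpoly x).
rewrite (monicP (minCpoly_monic x)) scale1r in Drs.
have [Qs [QsC [s1 Ds1 gen]]] := num_field_exists rs.
have [xs _ Dx] : exists2 xs, xs \in s1 & x = QsC xs.
  by apply/mapP; rewrite Ds1 -root_prod_XsubC -Drs root_minCpoly.
have [ys _ Dy] : exists2 ys, ys \in s1 & y = QsC ys.
  by apply/mapP; rewrite Ds1 -root_prod_XsubC -Drs.
have hom1 : kHom 1 1 (\1%VF : 'End(Qs)) by rewrite kHom1.
have root_ys : root (map_poly \1%VF (minPoly 1 xs)) ys.
  rewrite (eq_map_poly (fun a => id_lfunE a)) map_poly_id //.
  by apply: (num_field_conjugate (QsC := QsC)); rewrite -Dx -Dy.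
pose f := kHomExtend 1 \1 xs ys.
have hom_f : kHom 1 <<1; xs>> f := kHomExtendP (subvv _) hom1 root_ys.
have split_q := num_field_splitting (etrans (esym Dq) Drs) Ds1 gen <<1; xs>>%AS.
have q_over1 : map_poly (in_alg Qs) q \is a polyOver 1%VS.
  by apply/polyOverP=> i; rewrite coef_map /= rpredZ ?mem1v.
have [g hom_g Dg] := kHom_extends (subv_adjoin 1 xs) hom_f q_over1 split_q.
pose gM := GRing.isMonoidMorphism.Build _ _ (fun_of_lfun g)
  (kHom_monoid_morphism hom_g).
have [nu Dnu] := extend_algC_subfield_aut QsC (HB.pack (fun_of_lfun g) gM).
exists nu; rewrite Dx -Dnu /= -Dg ?memv_adjoin // Dy.
by rewrite (kHomExtend_val hom1 root_ys).
Qed.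

(* An algebraic number fixed by every automorphism of algC is rational: all
   the roots of its minimal polynomial then coincide with it, so it is, up to
   sign and the degree, the subleading (rational) coefficient. *)
Lemma aut_fixed_Crat x :
  (forall nu : {rmorphism algC -> algC}, nu x = x) -> x \in Crat.
Proof.
move=> x_fixed; have [q [Dq _] _] := minCpolyP x.
have [rs Drs] := closed_field_poly_normal (minCpoly x).
rewrite (monicP (minCpoly_monic x)) scale1r in Drs.
have rs_x r : r \in rs -> r = x.
  rewrite -root_prod_XsubC -Drs => /conjugate_aut[nu <-].
  exact: x_fixed.
have rs_n0 : size rs != 0%N.
  by have := size_minCpoly x; rewrite Drs size_prod_XsubC; case: (size rs).
have := coefPn_prod_XsubC rs_n0; rewrite -Drs Dq coef_map /=.
rewrite (eq_big_seq (fun=> x)) ?big_const_seq ?count_predT ?iter_addr_0; last exact: rs_x.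
rewrite -mulr_natl => Dcoef.
have -> : x = - ratr q`_(size rs).-1 / (size rs)%:R.
  by rewrite Dcoef opprK mulrAC divff ?mul1r // pnatr_eq0.
by rewrite rpred_div ?rpredN ?rpred_nat ?Crat_rat.
Qed.

Lemma irreducible_conjugate (q : {poly rat}) x y :
    irreducible_poly q -> root (pQtoC q) x -> root (pQtoC q) y ->
  root (minCpoly x) y.
Proof.
move=> irr_q root_x root_y; have [r [Dr _] min_r] := minCpolyP x.
have r_q : r %| q by rewrite -min_r.
have r_n1 : size r != 1%N.
  by rewrite -(size_map_poly (ratr : rat -> algC)) -Dr gtn_eqF ?size_minCpoly.
case/andP: (irr_q r r_n1 r_q) => _ /dvdpP[k Dr_q].
by rewrite Dr Dr_q rmorphM rootM /= root_y orbT.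
Qed.

Lemma irreducible_separable (q : {poly rat}) :
  irreducible_poly q -> separable_poly q.
Proof.
move=> irr_q; rewrite unlock /coprimep.
have [g1 | /eqp_dvdl gq] := irredp_XsubCP irr_q (dvdp_gcdl q q^`()).
  by rewrite (eqp_size g1) size_poly1.
have q'_n0 : q^`() != 0 by rewrite -size_poly_eq0 size_deriv -(subnKC irr_q.1).
have q_q' : q %| q^`() by rewrite -gq dvdp_gcdr.
have := dvdp_leq q'_n0 q_q'; rewrite size_deriv.
by case: (size q) irr_q.1 => [|[|n]] // _; rewrite ltnn.
Qed.

Lemma aut_root (q : {poly rat}) (nu : {rmorphism algC -> algC}) x :
  root (pQtoC q) x -> root (pQtoC q) (nu x).
Proof.
by rewrite -(fmorph_root nu) -map_poly_comp (eq_map_poly (fmorph_rat nu)).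
Qed.

Definition aut_commutator (nu mu : {rmorphism algC -> algC}) :
  {rmorphism algC -> algC} :=
  (nu \o mu \o algC_invaut nu \o algC_invaut mu)%FUN.

(* Automorphisms act on roots of unity by powers, hence commute there:
   commutators fix every root of unity. *)
Lemma aut_commutator_unity (nu mu : {rmorphism algC -> algC}) z :
  is_root_of_unity z -> aut_commutator nu mu z = z.
Proof.
case=> n [n_gt0 zn1]; rewrite /aut_commutator /=.
set u := algC_invaut nu _.
have un1 : u ^+ n = 1 by rewrite /u -!rmorphXn zn1 !rmorph1.
by rewrite (aut_unity_rootC nu mu n_gt0 un1) /u !algC_invautK.
Qed.

Lemma root_of_unity_neq0 (z : algC) : is_root_of_unity z -> z != 0.
Proof.
case=> n [n_gt0 zn1]; apply: contra_eq_neq zn1 => ->.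
by rewrite expr0n gtn_eqF // eq_sym oner_neq0.
Qed.

Lemma aut_commutator_relation (nu mu : {rmorphism algC -> algC})
    (b1 b2 b3 xi1 xi2 xi3 : algC) :
    is_root_of_unity xi1 -> is_root_of_unity xi2 -> is_root_of_unity xi3 ->
    b1 * xi1 + b2 * xi2 + b3 * xi3 = 0 ->
  aut_commutator nu mu b1 * xi1 + aut_commutator nu mu b2 * xi2
    + aut_commutator nu mu b3 * xi3 = 0.
Proof.
move=> u1 u2 u3 E; have := congr1 (aut_commutator nu mu) E.
by rewrite rmorph0 !rmorphD !rmorphM !(aut_commutator_unity _ _ u1,
  aut_commutator_unity _ _ u2, aut_commutator_unity _ _ u3).
Qed.

Section CubeRootsOfUnity.

Variables (F : fieldType) (om : F).
Hypothesis om_prim : 3.-primitive_root om.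

Lemma prim3_expr3 : om ^+ 3 = 1.
Proof. exact: prim_expr_order om_prim. Qed.

Lemma prim3_neq1 : om != 1.
Proof. by have := eq_prim_root_expr om_prim 1 0; rewrite expr1 expr0 => ->. Qed.

Lemma prim3_sum : 1 + om + om ^+ 2 = 0.
Proof.
have : (om - 1) * (1 + om + om ^+ 2) = 0.
  rewrite (_ : (om - 1) * _ = om ^+ 3 - 1); last by ring.
  by rewrite prim3_expr3 subrr.
by move/eqP; rewrite mulf_eq0 subr_eq0 (negbTE prim3_neq1) => /eqP.
Qed.

(* If the relation a1 x1 + a2 x2 + a3 x3 = 0 is invariant under cyclic shifts
   of the a_i, then the product of the Lagrange resolvents vanishes; so either
   the x-resolvent vanishes or om is a rational function of the a_i. *)
Lemma resolvent_factor (a1 a2 a3 x1 x2 x3 : F) :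
    a2 != a3 ->
    a1 * x1 + a2 * x2 + a3 * x3 = 0 ->
    a2 * x1 + a3 * x2 + a1 * x3 = 0 ->
    a3 * x1 + a1 * x2 + a2 * x3 = 0 ->
  x1 + om * x2 + om ^+ 2 * x3 = 0 \/ om = (a2 - a1) / (a3 - a2).
Proof.
move=> d23 E1 E2 E3.
have : (x1 + om * x2 + om ^+ 2 * x3) * (a1 + om ^+ 2 * a2 + om * a3) = 0.
  rewrite (_ : _ * _ = (a1 * x1 + a2 * x2 + a3 * x3)
      + om ^+ 2 * (a2 * x1 + a3 * x2 + a1 * x3)
      + om * (a3 * x1 + a1 * x2 + a2 * x3)
      + (om ^+ 3 - 1) * (a2 * x2 + om * a2 * x3 + a3 * x3)); last by ring.
  by rewrite E1 E2 E3 prim3_expr3 subrr !(mulr0, mul0r, addr0).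
move/eqP; rewrite mulf_eq0 => /orP[/eqP-> | /eqP a_res]; [by left | right].
apply: (canRL (mulfK _)); first by rewrite subr_eq0 eq_sym.
apply/eqP; rewrite -subr_eq0; apply/eqP.
rewrite (_ : _ - _ = (a1 + om ^+ 2 * a2 + om * a3) - (1 + om + om ^+ 2) * a2);
  last by ring.
by rewrite a_res prim3_sum mul0r subrr.
Qed.

Lemma resolvents_eq0 (x1 x2 x3 : F) :
    x1 + om * x2 + om ^+ 2 * x3 = 0 ->
    x1 + om ^+ 2 * x2 + (om ^+ 2) ^+ 2 * x3 = 0 ->
  x1 = x2 /\ x2 = x3.
Proof.
have om4 : (om ^+ 2) ^+ 2 = om.
  by rewrite -exprM (_ : (2 * 2 = 3 + 1)%N) // exprD prim3_expr3 mul1r expr1.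
rewrite om4 => L1 L2.
have om_n0 : om != 0.
  by apply: contra_eq_neq prim3_expr3 => ->; rewrite expr0n eq_sym oner_neq0.
have e23 : x2 = x3.
  have : om * (1 - om) * (x2 - x3) = 0.
    rewrite (_ : om * (1 - om) * (x2 - x3) = (x1 + om * x2 + om ^+ 2 * x3)
      - (x1 + om ^+ 2 * x2 + om * x3)); last by ring.
    by rewrite L1 L2 subrr.
  move/eqP; rewrite !mulf_eq0 (negbTE om_n0) subr_eq0 eq_sym (negbTE prim3_neq1).
  by rewrite subr_eq0 => /eqP.
split=> //; apply/eqP; rewrite -subr_eq0; apply/eqP.
rewrite (_ : _ - _ = (x1 + om * x2 + om ^+ 2 * x3) - (1 + om + om ^+ 2) * x2);
  last by rewrite e23; ring.
by rewrite L1 prim3_sum mul0r subrr.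
Qed.

End CubeRootsOfUnity.

Section RationalCubic.

Variables (p : {poly rat}) (a1 a2 a3 : algC).
Hypothesis p_irr : irreducible_poly p.
Hypothesis p_roots : pQtoC p = \prod_(a <- [:: a1; a2; a3]) ('X - a%:P).

Local Notation roots := [:: a1; a2; a3].
Local Notation aut := {rmorphism algC -> algC}.

Lemma cubic_roots_uniq : uniq roots.
Proof.
by rewrite -separable_prod_XsubC -p_roots separable_map irreducible_separable.
Qed.

Lemma cubic_roots_distinct : [/\ a1 != a2, a1 != a3 & a2 != a3].
Proof.
by have := cubic_roots_uniq; rewrite /= !inE negb_or andbT => /andP[/andP[]].
Qed.

Lemma root_cubic x : root (pQtoC p) x = (x \in roots).
Proof. by rewrite p_roots root_prod_XsubC. Qed.

Lemma aut_roots (nu : aut) a : a \in roots -> nu a \in roots.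
Proof. by rewrite -!root_cubic; apply: aut_root. Qed.

Lemma roots_conjugate a b : a \in roots -> b \in roots ->
  exists nu : aut, nu a = b.
Proof.
by rewrite -!root_cubic => ra rb; apply/conjugate_aut/(irreducible_conjugate p_irr).
Qed.

Lemma aut_cases (nu : aut) :
  [/\ nu a1 = a1, nu a2 = a2 & nu a3 = a3] \/
  [/\ nu a1 = a1, nu a2 = a3 & nu a3 = a2] \/
  [/\ nu a1 = a2, nu a2 = a1 & nu a3 = a3] \/
  [/\ nu a1 = a2, nu a2 = a3 & nu a3 = a1] \/
  [/\ nu a1 = a3, nu a2 = a1 & nu a3 = a2] \/
  [/\ nu a1 = a3, nu a2 = a2 & nu a3 = a1].
Proof.
have [d12 d13 d23] := cubic_roots_distinct.
have n12 : nu a1 != nu a2 by rewrite (inj_eq (fmorph_inj nu)).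
have n13 : nu a1 != nu a3 by rewrite (inj_eq (fmorph_inj nu)).
have n23 : nu a2 != nu a3 by rewrite (inj_eq (fmorph_inj nu)).
have r1 : nu a1 \in roots by apply: aut_roots; rewrite !inE eqxx.
have r2 : nu a2 \in roots by apply: aut_roots; rewrite !inE eqxx ?orbT.
have r3 : nu a3 \in roots by apply: aut_roots; rewrite !inE eqxx ?orbT.
move: r1 r2 r3; rewrite !inE => /or3P[]/eqP e1 /or3P[]/eqP e2 /or3P[]/eqP e3.
all: move: n12 n13 n23; rewrite e1 e2 e3 ?eqxx // => _ _ _.
all: do ?[by left; split | right]; by split.
Qed.

Definition is_3cycle (nu : aut) := [/\ nu a1 = a2, nu a2 = a3 & nu a3 = a1].

(* By transitivity some automorphism induces this 3-cycle: compose those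
   sending a1 to a2 and to a3. *)
Lemma cycle_exists : exists g : aut, is_3cycle g.
Proof.
have [d12 d13 d23] := cubic_roots_distinct.
have r1 : a1 \in roots by rewrite !inE eqxx.
have r2 : a2 \in roots by rewrite !inE eqxx orbT.
have r3 : a3 \in roots by rewrite !inE eqxx !orbT.
have [[s Es] [t Et]] := (roots_conjugate r1 r2, roots_conjugate r1 r3).
case: (aut_cases s) => [[s1 s2 s3]|[[s1 s2 s3]|[[s1 s2 s3]|[[s1 s2 s3]|[[s1 s2 s3]|[s1 s2 s3]]]]]];
  rewrite ?Es in s1; try by move: d12 d23; rewrite s1 eqxx.
- case: (aut_cases t) => [[t1 t2 t3]|[[t1 t2 t3]|[[t1 t2 t3]|[[t1 t2 t3]|[[t1 t2 t3]|[t1 t2 t3]]]]]];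
    rewrite ?Et in t1; try by move: d13 d23; rewrite t1 eqxx.
  + by exists (t \o t)%FUN; split; rewrite /= ?Et ?t2 ?t3.
  + by exists (t \o s)%FUN; split; rewrite /= ?Es ?s2 ?s3 ?Et ?t2 ?t3.
- by exists s; split; rewrite ?Es.
Qed.

(* The square root of the discriminant; it is fixed exactly by the
   automorphisms inducing even permutations of the roots. *)
Definition disc_sqrt := (a1 - a2) * (a1 - a3) * (a2 - a3).

Lemma odd_commutator_cycle (t g : aut) :
  t disc_sqrt != disc_sqrt -> is_3cycle g -> is_3cycle (aut_commutator t g).
Proof.
move=> t_odd [g1 g2 g3].
have inv (nu : aut) x y : nu x = y -> algC_invaut nu y = x.
  by move=> <-; rewrite algC_autK.
move: t_odd; rewrite /disc_sqrt !rmorphM !rmorphB /is_3cycle /aut_commutator /=.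
case: (aut_cases t) => [[t1 t2 t3]|[[t1 t2 t3]|[[t1 t2 t3]|[[t1 t2 t3]|[[t1 t2 t3]|[t1 t2 t3]]]]]];
  rewrite t1 t2 t3.
all: first [ move=> even; exfalso; move/eqP: even; apply; ring
           | move=> _; split;
             rewrite !(inv _ _ _ g1, inv _ _ _ g2, inv _ _ _ g3,
                       inv _ _ _ t1, inv _ _ _ t2, inv _ _ _ t3) ?g1 ?g2 ?g3 //].
Qed.

(* If the discriminant is a rational square, Q(a1) contains all the roots:
   a2 + a3 = s - a1 with s rational, and a2 - a3 = disc_sqrt / p'(a1). *)
Lemma roots_in_Q_alpha : disc_sqrt \in Crat ->
  forall a, a \in roots -> genfield [:: a1] a.
Proof.
move=> Qdisc a a_root S S_sub Sa; have S1 := Sa a1 (mem_head _ _).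
have [d12 d13 d23] := cubic_roots_distinct.
pose D := (a1 - a2) * (a1 - a3).
have SD : S D.
  have -> : D = (pQtoC p^`()).[a1].
    rewrite -deriv_map p_roots !big_cons big_nil mulr1 !derivM !derivXsubC.
    by rewrite !hornerE /D; ring.
  exact: subfield_horner.
have Ssum : S (a1 + a2 + a3).
  apply: (subfield_Crat S_sub); rewrite -[_ + _]opprK rpredN.
  have := coefPn_prod_XsubC (isT : size roots != 0%N).
  rewrite -p_roots coef_map /= big_cons big_cons big_seq1 addrA => <-.
  exact: Crat_rat.
have Shalf x : S x -> S (x / 2).
  by move=> Sx; apply: subfield_div => //; apply: subfield_Crat; rewrite ?rpred_nat.
have D_n0 : D != 0 by rewrite mulf_neq0 // subr_eq0.
have SQ : S (disc_sqrt / D) by apply: subfield_div => //; apply: subfield_Crat.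
move: a_root; rewrite !inE => /or3P[]/eqP->.
- exact: S1.
- have -> : a2 = ((a1 + a2 + a3) - a1 + disc_sqrt / D) / 2.
    by rewrite /disc_sqrt -/D; field.
  by apply: Shalf; apply: subfieldD => //; apply: subfieldB.
- have -> : a3 = ((a1 + a2 + a3) - a1 - disc_sqrt / D) / 2.
    by rewrite /disc_sqrt -/D; field.
  by apply: Shalf; apply: subfieldB => //; apply: subfieldB.
Qed.

Lemma even_Galois_normal :
  (forall nu : aut, nu disc_sqrt = disc_sqrt) -> normal_over_Q (genfield [:: a1]).
Proof.
move=> disc_fixed x Qx q q_irr qx y qy.
have [nu <-] := conjugate_aut (irreducible_conjugate q_irr qx qy).
apply: genfield_aut Qx => _ /[1!inE] /eqP->.
apply: (roots_in_Q_alpha (aut_fixed_Crat disc_fixed)).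
by apply: aut_roots; rewrite inE eqxx.
Qed.

Lemma odd_aut_exists :
  ~ normal_over_Q (genfield [:: a1]) -> exists t : aut, t disc_sqrt != disc_sqrt.
Proof.
move=> not_normal; apply: NNPP => no_odd; apply: not_normal.
apply: even_Galois_normal => nu; apply/eqP/negPn/negP => nu_odd.
by apply: no_odd; exists nu.
Qed.

End RationalCubic.

Theorem lemma11 (p : {poly rat}) (a1 a2 a3 : algC) :
  (* p is the minimal polynomial of alpha = a1, of degree 3 *)
  p \is monic -> irreducible_poly p -> size p = 4%N ->
  (* a1, a2, a3 are the conjugates of alpha (the roots of p) *)
  map_poly ratr p = ('X - a1%:P) * ('X - a2%:P) * ('X - a3%:P) ->
  (* Q(alpha)/Q is not Galois *)
  ~ normal_over_Q (genfield [:: a1]) ->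
  (* Q(a1,a2,a3) contains no primitive cube root of unity *)
  (forall z : algC, genfield [:: a1; a2; a3] z -> ~ 3.-primitive_root z) ->
  forall xi1 xi2 xi3 : algC,
    is_root_of_unity xi1 -> is_root_of_unity xi2 -> is_root_of_unity xi3 ->
    a1 * xi1 + a2 * xi2 + a3 * xi3 = 0 ->
    (xi1 = xi2 /\ xi2 = xi3) /\ a1 + a2 + a3 = 0.
Proof.
move=> _ p_irr _ Hp not_normal no_cube_root xi1 xi2 xi3 xi1_unit xi2_unit xi3_unit E1.
have p_roots : map_poly ratr p = \prod_(a <- [:: a1; a2; a3]) ('X - a%:P).
  by rewrite Hp !big_cons big_nil mulr1 mulrA.
have [_ _ d23] := cubic_roots_distinct p_irr p_roots.
(* An automorphism fixing the xi_i and cycling the a_i yields two more relations. *)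
have [g g_cycle] := cycle_exists p_irr p_roots.
have [t t_odd] := odd_aut_exists p_irr p_roots not_normal.
have [w1 w2 w3] := odd_commutator_cycle p_irr p_roots t_odd g_cycle.
have shift := aut_commutator_relation t g xi1_unit xi2_unit xi3_unit.
have := shift _ _ _ E1; rewrite w1 w2 w3 => E2.
have := shift _ _ _ E2; rewrite w1 w2 w3 => E3.
(* Since Q(a1, a2, a3) has no primitive cube root, both xi-resolvents vanish. *)
have xi_res mu : 3.-primitive_root mu -> xi1 + mu * xi2 + mu ^+ 2 * xi3 = 0.
  move=> mu_prim; have [//|mu_def] := resolvent_factor mu_prim d23 E1 E2 E3.
  have gen := genfield_subfield [:: a1; a2; a3].
  have : genfield [:: a1; a2; a3] mu.
    by rewrite mu_def; apply: (subfield_div gen); apply: (subfieldB gen);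
      apply: mem_genfield; rewrite !inE eqxx ?orbT.
  by move/no_cube_root.
have [om om_prim] := C_prim_root_exists (isT : (0 < 3)%N).
have om2_prim : 3.-primitive_root (om ^+ 2) by rewrite prim_root_exp_coprime.
have [e12 e23] := resolvents_eq0 om_prim (xi_res _ om_prim) (xi_res _ om2_prim).
split=> //; move: E1; rewrite -e23 -e12 -!mulrDl => /eqP.
by rewrite mulf_eq0 (negbTE (root_of_unity_neq0 xi1_unit)) orbF => /eqP.
Qed.
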